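(* Let $E$ be a finite set and $\underline I=(I_\omega)_{\omega\in E}$ a family of non-empty finite sets, and let $\mathrm{CC}(\underline I)$ be the set of causally complete spaces of input histories $\Theta$ with $E^\Theta=E$ and $I^\Theta_\omega=I_\omega$ for all $\omega\in E$. Then for all $\Theta,\Theta'\in\mathrm{CC}(\underline I)$ the meet $\Theta\wedge\Theta'$ lies in $\mathrm{CC}(\underline I)$; and if $|E|\ge 2$, there exist $\Theta,\Theta'\in\mathrm{CC}(\underline I)$ whose join $\Theta\vee\Theta'$ does not lie in $\mathrm{CC}(\underline I)$.
   Context: Partial functions on $\underline I$: $f$ with $\mathrm{dom}(f)\subseteq E$, $f(\omega)\in I_\omega$, ordered by restriction. Compatible = agreeing on common domain; compatible $\mathcal F$ has join $\bigvee\mathcal F$ (union). $\Theta$ is $\vee$-prime if for compatible $\mathcal F\subseteq\Theta$ with $\bigvee\mathcal F\in\Theta$ we have $\bigvee\mathcal F\in\mathcal F$. A space of input histories is a finite $\vee$-prime set of partial functions; $E^\Theta=\bigcup_{h\in\Theta}\mathrm{dom}(h)$, $I^\Theta_\omega=\{h(\omega):h\in\Theta,\omega\in\mathrm{dom}(h)\}$, $\mathrm{Ext}(\Theta)=\{\bigvee\mathcal F:\emptyset\ne\mathcal F\subseteq\Theta\text{ compatible}\}$. Free-choice: maximal elements of $\mathrm{Ext}(\Theta)$ are exactly the total functions in $\prod_{\omega\in E^\Theta}I^\Theta_\omega$. $\mathrm{tips}_\Theta(h)=\mathrm{dom}(h)\setminus\bigcup\{\mathrm{dom}(k):k\in\mathrm{Ext}(\Theta),k<h\}$.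 Causally complete: free-choice and $|\mathrm{tips}_\Theta(h)|=1$ for all $h\in\Theta$. For a set $W$, $\mathrm{Prime}(W)=\{w\in W:\text{for all compatible }\mathcal F\subseteq W,\ w=\bigvee\mathcal F\Rightarrow w\in\mathcal F\}$. Meet and join of spaces: $\Theta\wedge\Theta'=\mathrm{Prime}(\mathrm{Ext}(\Theta)\cup\mathrm{Ext}(\Theta'))$, $\Theta\vee\Theta'=\mathrm{Prime}(\mathrm{Ext}(\Theta)\cap\mathrm{Ext}(\Theta'))$. *)

From mathcomp Require Import all_boot.
Set Implicit Arguments.
Unset Strict Implicit.
Unset Printing Implicit Defensive.

Section PartialFunctions.
Variables (E : finType) (I : E -> finType).

Definition pfun := {dffun forall w : E, option (I w)}.

Definition dom (f : pfun) : {set E} := [set w | f w != None].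

Definition pf_le (f g : pfun) : bool :=
  [forall w, (f w != None) ==> (g w == f w)].
Definition pf_lt (f g : pfun) : bool := pf_le f g && (f != g).

Definition compatible (F : {set pfun}) : bool :=
  [forall f in F, forall g in F, forall w,
     ((f w != None) && (g w != None)) ==> (f w == g w)].

(* join (union) of a family; meaningful for compatible families *)
Definition pjoin (F : {set pfun}) : pfun :=
  [ffun w => if [pick f in F | f w != None] is Some f then f w else None].

Definition vee_prime (Th : {set pfun}) : Prop :=
  forall F : {set pfun}, F \subset Th -> compatible F ->
    pjoin F \in Th -> pjoin F \in F.

Definition EOf (Th : {set pfun}) : {set E} := \bigcup_(h in Th) dom h.
Definition IOf (Th : {set pfun}) (w : E) : {set I w} :=
  [set x | [exists h in Th, h w == Some x]].

Definition Ext (Th : {set pfun}) : {set pfun} :=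
  [set pjoin F | F in [set F in powerset Th | (F != set0) && compatible F]].

Definition maximal_in (W : {set pfun}) (k : pfun) : Prop :=
  k \in W /\ (forall k', k' \in W -> pf_le k k' -> k' = k).

Definition total_in_prod (Th : {set pfun}) (k : pfun) : Prop :=
  dom k = EOf Th /\
  (forall w, w \in EOf Th -> exists2 x, k w = Some x & x \in IOf Th w).

Definition free_choice (Th : {set pfun}) : Prop :=
  forall k : pfun, maximal_in (Ext Th) k <-> total_in_prod Th k.

Definition tips (Th : {set pfun}) (h : pfun) : {set E} :=
  dom h :\: \bigcup_(k in Ext Th | pf_lt k h) dom k.

Definition causally_complete (Th : {set pfun}) : Prop :=
  free_choice Th /\ (forall h, h \in Th -> #|tips Th h| = 1).

(* space of input histories (finite automatically: a finset) *)
Definition space_of_input_histories (Th : {set pfun}) : Prop := vee_prime Th.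

Definition Prime (W : {set pfun}) : {set pfun} :=
  [set w in W | [forall F in powerset W, compatible F ==> (w == pjoin F) ==> (w \in F)]].

Definition smeet (Th Th' : {set pfun}) : {set pfun} := Prime (Ext Th :|: Ext Th').
Definition sjoin (Th Th' : {set pfun}) : {set pfun} := Prime (Ext Th :&: Ext Th').

Definition CC (Th : {set pfun}) : Prop :=
  space_of_input_histories Th /\ causally_complete Th /\
  EOf Th = [set: E] /\ (forall w, IOf Th w = [set: I w]).

End PartialFunctions.

(* Every history of a set W is the join of the primes of W below it, so Prime W
   has the same events and inputs as W, and every total history of W lies in
   Ext (Prime W).  For W = Ext Th :|: Ext Th', this gives the meet the events,
   inputs and free choice of Th and Th'.  A prime of W that is a join of
   histories of Th lies in Th, and its tips in Prime W are among its tips in Th;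
   as a history of a vee-prime set always has a tip, it has exactly one.
   For the join, order two events as a < b in Th and as b < a in Th' (all other
   events unordered) and take the histories whose domains are principal
   down-sets.  Every history of Ext Th :&: Ext Th' defined at a is defined at b
   and conversely, so the history with domain {a, b} is prime there and has both
   a and b as tips. *)

From mathcomp Require Import all_boot.
Set Implicit Arguments. Unset Strict Implicit. Unset Printing Implicit Defensive.

Section PartialFunctions.
Variables (E : finType) (I : E -> finType).
Local Notation pf := (pfun I).
Implicit Types (f g h k t : pf) (F W Th : {set pf}).

Lemma in_dom f w : (w \in dom f) = (f w != None).
Proof. by rewrite inE. Qed.

Lemma pf_leP f g : reflect (forall w, w \in dom f -> g w = f w) (pf_le f g).
Proof.
apply: (iffP forallP) => [le_fg w fw | le_fg w].
  by move/implyP: (le_fg w); rewrite -in_dom => /(_ fw)/eqP.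
by apply/implyP; rewrite -in_dom => /le_fg ->.
Qed.

Lemma pf_le_refl f : pf_le f f.
Proof. exact/pf_leP. Qed.

Lemma pf_le_dom f g : pf_le f g -> dom f \subset dom g.
Proof. by move/pf_leP=> le_fg; apply/subsetP=> w fw; rewrite in_dom le_fg -?in_dom. Qed.

Lemma pf_le_trans f g h : pf_le f g -> pf_le g h -> pf_le f h.
Proof.
move=> le_fg /pf_leP le_gh; apply/pf_leP => w fw.
by rewrite le_gh ?(pf_leP _ _ le_fg) // (subsetP (pf_le_dom le_fg)).
Qed.

Lemma pf_le_dom_eq f g : pf_le f g -> dom g \subset dom f -> f = g.
Proof.
move=> /pf_leP le_fg /subsetP sub_gf; apply/ffunP => w.
have [fw|fNw] := boolP (w \in dom f); first by rewrite le_fg.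
have gNw : w \notin dom g by apply: contra fNw => /sub_gf.
by move: fNw gNw; rewrite !in_dom !negbK => /eqP-> /eqP->.
Qed.

Lemma pf_le_anti f g : pf_le f g -> pf_le g f -> f = g.
Proof. by move=> le_fg /pf_le_dom; apply: pf_le_dom_eq. Qed.

Lemma pf_lt_dom f g : pf_le f g -> pf_lt f g = (dom f != dom g).
Proof.
move=> le_fg; rewrite /pf_lt le_fg; congr negb.
by apply/eqP/eqP => [->//|eq_dom]; apply: pf_le_dom_eq; rewrite ?eq_dom.
Qed.

Lemma pf_le_lt_trans f g h : pf_le f g -> pf_lt g h -> pf_lt f h.
Proof.
move=> le_fg /andP[le_gh ne_gh]; rewrite /pf_lt (pf_le_trans le_fg le_gh).
by apply: contraNneq ne_gh => eq_fh; apply/eqP/(pf_le_anti le_gh); rewrite -eq_fh.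
Qed.

Lemma dom_pjoin F : dom (pjoin F) = \bigcup_(f in F) dom f.
Proof.
apply/setP => w; rewrite in_dom /pjoin ffunE; apply/idP/bigcupP.
  by case: pickP => // f /andP[fF fw] _; exists f; rewrite ?in_dom.
case=> f fF; rewrite in_dom => fw; case: pickP => [g /andP[_ gw] //|/(_ f)].
by rewrite fF fw.
Qed.

Lemma compatibleP F : reflect (forall f g w, f \in F -> g \in F ->
   w \in dom f -> w \in dom g -> f w = g w) (compatible F).
Proof.
apply: (iffP forall_inP) => [compF f g w fF gF | compF f fF].
  move/forall_inP: (compF f fF) => /(_ g gF)/forallP/(_ w)/implyP.
  by rewrite !in_dom => eq_fg fw gw; apply/eqP/eq_fg; rewrite fw.
apply/forall_inP => g gF; apply/forallP => w; apply/implyP => /andP[fw gw].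
by apply/eqP/compF; rewrite ?in_dom.
Qed.

Lemma pjoin_ub F f : compatible F -> f \in F -> pf_le f (pjoin F).
Proof.
move=> /compatibleP compF fF; apply/pf_leP => w fw; rewrite /pjoin ffunE.
case: pickP => [g /andP[gF gw]|/(_ f)]; last by rewrite fF -in_dom fw.
by apply: compF gF fF _ fw; rewrite in_dom.
Qed.

Lemma bounded_compatible F t : (forall f, f \in F -> pf_le f t) -> compatible F.
Proof.
move=> ub; apply/compatibleP => f g w fF gF fw gw.
by rewrite -(pf_leP _ _ (ub f fF)) // (pf_leP _ _ (ub g gF)).
Qed.

Lemma pjoin_cover F t : (forall f, f \in F -> pf_le f t) ->
  dom t \subset \bigcup_(f in F) dom f -> pjoin F = t.
Proof.
move=> ub cover; apply: pf_le_dom_eq; last by rewrite dom_pjoin.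
apply/pf_leP => w; rewrite dom_pjoin => /bigcupP[f fF fw].
rewrite (pf_leP _ _ (ub f fF)) //.
by rewrite (pf_leP _ _ (pjoin_ub (bounded_compatible ub) fF)).
Qed.

Lemma pjoin1 f : pjoin [set f] = f.
Proof.
apply: pjoin_cover => [g /set1P->|]; first exact: pf_le_refl.
by rewrite big_set1.
Qed.

Lemma ExtP Th k : reflect
  (exists2 F : {set pf}, [/\ F \subset Th, F != set0 & compatible F] & k = pjoin F)
  (k \in Ext Th).
Proof.
apply: (iffP imsetP) => [[F] | [F [sF nF cF] ->]].
  by rewrite inE powersetE => /and3P[sF nF cF] ->; exists F.
by exists F; rewrite // inE powersetE sF nF cF.
Qed.

Lemma sub_Ext Th : Th \subset Ext Th.
Proof.
apply/subsetP => f fTh; apply/ExtP; exists [set f]; last by rewrite pjoin1.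
split; [by rewrite sub1set | by apply/set0Pn; exists f; rewrite inE |].
by apply: (bounded_compatible (t := f)) => g /set1P->; apply: pf_le_refl.
Qed.

Lemma Ext_generator Th k w : k \in Ext Th -> w \in dom k ->
  exists g, [/\ g \in Th, pf_le g k & w \in dom g].
Proof.
case/ExtP => F [sF _ cF] ->; rewrite dom_pjoin => /bigcupP[g gF gw].
by exists g; rewrite (subsetP sF) ?pjoin_ub.
Qed.

Lemma PrimeP W p : reflect
  (p \in W /\
   forall F : {set pf}, F \subset W -> compatible F -> p = pjoin F -> p \in F)
  (p \in Prime W).
Proof.
rewrite inE; apply: (iffP andP) => -[pW prime_p]; split=> //.
  move=> F sF cF eq_p; move/forall_inP: prime_p => /(_ F).
  by rewrite powersetE cF eq_p eqxx => /(_ sF).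
apply/forall_inP => F; rewrite powersetE => sF.
by apply/implyP => cF; apply/implyP => /eqP; apply: prime_p.
Qed.

Lemma Prime_sub W : Prime W \subset W.
Proof. by apply/subsetP => p /PrimeP[]. Qed.

Lemma Prime_vee W : vee_prime (Prime W).
Proof.
move=> F sF cF /PrimeP[_]; apply=> //.
exact: subset_trans sF (Prime_sub W).
Qed.

Lemma Prime_below W t w : t \in W -> w \in dom t ->
  exists p, [/\ p \in Prime W, pf_le p t & w \in dom p].
Proof.
move: {2}#|dom t|.+1 (ltnSn #|dom t|) => n; elim: n t => // n IH t.
rewrite ltnS => le_t_n tW wt.
have [tP|] := boolP (t \in Prime W); first by exists t; rewrite ?pf_le_refl.
rewrite inE tW => /forall_inPn[F]; rewrite powersetE => sF.
rewrite negb_imply => /andP[cF]; rewrite negb_imply => /andP[/eqP eq_t tNF].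
have : w \in dom (pjoin F) by rewrite -eq_t.
rewrite dom_pjoin => /bigcupP[f fF fw].
have le_ft : pf_le f t by rewrite eq_t pjoin_ub.
have lt_ft : dom f \proper dom t.
  rewrite properEneq pf_le_dom // andbT -(pf_lt_dom le_ft) /pf_lt le_ft.
  by apply: contraNneq tNF => <-.
have [p [pP le_pf pw]] :=
  IH f (leq_trans (proper_card lt_ft) le_t_n) (subsetP sF f fF) fw.
by exists p; split => //; apply: pf_le_trans le_pf le_ft.
Qed.

Lemma pjoin_Prime_below W t :
  t \in W -> pjoin [set p in Prime W | pf_le p t] = t.
Proof.
move=> tW; apply: pjoin_cover => [p|]; first by rewrite inE => /andP[].
apply/subsetP => w /(Prime_below tW)[p [pP le_pt pw]].
by apply/bigcupP; exists p => //; rewrite inE pP.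
Qed.

Lemma Ext_Prime W t : t \in W -> dom t != set0 -> t \in Ext (Prime W).
Proof.
move=> tW /set0Pn[w /(Prime_below tW)[p [pP le_pt _]]].
apply/ExtP; exists [set p in Prime W | pf_le p t]; last by rewrite pjoin_Prime_below.
split; [ by apply/subsetP => q; rewrite inE => /andP[]
       | by apply/set0Pn; exists p; rewrite inE pP | ].
by apply: (bounded_compatible (t := t)) => q; rewrite inE => /andP[].
Qed.

Lemma mem_Prime_Ext Th W h :
  Th \subset W -> h \in Prime W -> h \in Ext Th -> h \in Th.
Proof.
move=> sub /PrimeP[_ prime_h] /ExtP[F [sF _ cF] eq_h].
by apply: (subsetP sF); apply: prime_h eq_h => //; apply: subset_trans sF sub.
Qed.

Lemma EOfS Th W : Th \subset W -> EOf Th \subset EOf W.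
Proof.
move=> sub; apply/subsetP => w /bigcupP[h /(subsetP sub) hW hw].
by apply/bigcupP; exists h.
Qed.

Lemma IOfS Th W w : Th \subset W -> IOf Th w \subset IOf W w.
Proof.
move=> sub; apply/subsetP => x; rewrite !inE => /exists_inP[h /(subsetP sub) hW hx].
by apply/exists_inP; exists h.
Qed.

Lemma EOf_Prime W : EOf (Prime W) = EOf W.
Proof.
apply/eqP; rewrite eqEsubset EOfS ?Prime_sub //.
apply/subsetP => w /bigcupP[t tW /(Prime_below tW)[p [pP _ pw]]].
by apply/bigcupP; exists p.
Qed.

Lemma IOf_Prime W w : IOf (Prime W) w = IOf W w.
Proof.
apply/eqP; rewrite eqEsubset IOfS ?Prime_sub //.
apply/subsetP => x; rewrite !inE => /exists_inP[t tW /eqP tx].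
have /(Prime_below tW)[p [pP le_pt pw]] : w \in dom t by rewrite in_dom tx.
by apply/exists_inP; exists p; rewrite // -tx -(pf_leP _ _ le_pt).
Qed.

Lemma tipsE Th h :
  tips Th h = [set w in dom h | ~~ [exists g in Th, pf_lt g h && (w \in dom g)]].
Proof.
apply/setP => w; rewrite in_setD in_set andbC; congr (_ && ~~ _).
apply/bigcupP/exists_inP => [[k /andP[kExt lt_kh] wk] | [g gTh /andP[lt_gh wg]]].
  have [g [gTh le_gk wg]] := Ext_generator kExt wk.
  by exists g; rewrite // (pf_le_lt_trans le_gk lt_kh).
by exists g; rewrite // (subsetP (sub_Ext Th)) ?lt_gh.
Qed.

Lemma tips_neq0 Th h : vee_prime Th -> h \in Th -> tips Th h != set0.
Proof.
move=> veeTh hTh; apply/negP => /eqP tips0.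
set S := [set g in Th | pf_lt g h].
have S_ub g : g \in S -> pf_le g h by rewrite inE => /andP[_ /andP[]].
have eq_h : pjoin S = h.
  apply: pjoin_cover => //; apply/subsetP => w hw.
  have : w \notin tips Th h by rewrite tips0 inE.
  rewrite tipsE in_set hw negbK => /exists_inP[g gTh /andP[lt_gh wg]].
  by apply/bigcupP; exists g; rewrite // inE gTh.
have : pjoin S \in S.
  apply: veeTh; rewrite ?eq_h ?(bounded_compatible S_ub) //.
  by apply/subsetP => g; rewrite inE => /andP[].
by rewrite eq_h inE /pf_lt eqxx !andbF.
Qed.

Lemma tips_Prime_sub Th W h : Th \subset W -> tips (Prime W) h \subset tips Th h.
Proof.
move=> sub; apply/subsetP => w; rewrite !tipsE !in_set => /andP[-> noP] /=.
apply: contra noP => /exists_inP[g /(subsetP sub) gW /andP[lt_gh wg]].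
have [p [pP le_pg wp]] := Prime_below gW wg.
by apply/exists_inP; exists p; rewrite // (pf_le_lt_trans le_pg lt_gh).
Qed.

Lemma card_tips_Prime Th W h : Th \subset W -> #|tips Th h| = 1 ->
  h \in Prime W -> #|tips (Prime W) h| = 1.
Proof.
move=> sub tips1 hP; apply/eqP.
rewrite eqn_leq card_gt0 (tips_neq0 (@Prime_vee W) hP) andbT.
by rewrite -tips1 subset_leq_card // tips_Prime_sub.
Qed.

Lemma Ext_dom_neq0 Th k : vee_prime Th -> k \in Ext Th -> dom k != set0.
Proof.
move=> veeTh /ExtP[F [sF /set0Pn[f fF] cF] ->].
apply: subset_neq0 (tips_neq0 veeTh (subsetP sF f fF)).
by rewrite dom_pjoin (subset_trans (subsetDl _ _)) // (bigcup_sup f fF).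
Qed.

Definition restr (t : pf) (A : {set E}) : pf :=
  [ffun w => if w \in A then t w else None].

Lemma restr_le t A : pf_le (restr t A) t.
Proof. by apply/pf_leP => w; rewrite in_dom ffunE; case: ifP. Qed.

Lemma dom_restr t A : dom (restr t A) = A :&: dom t.
Proof. by apply/setP => w; rewrite in_setI !in_dom ffunE; case: ifP. Qed.

Section Totals.
Variable d : forall w, I w.

Lemma exists_total_le k : exists2 t : pf, pf_le k t & dom t = setT.
Proof.
exists [ffun w => Some (odflt (d w) (k w))].
  by apply/pf_leP => w; rewrite in_dom ffunE; case: (k w).
by apply/setP => w; rewrite in_dom ffunE in_setT.
Qed.

Lemma exists_total_at w (x : I w) : exists2 t : pf, t w = Some x & dom t = setT.
Proof.
exists [ffun v => Some (dfwith d x v)]; first by rewrite ffunE dfwith_in.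
by apply/setP => v; rewrite in_dom ffunE in_setT.
Qed.

Lemma total_in_prodE Th k : EOf Th = setT -> (forall w, IOf Th w = setT) ->
  total_in_prod Th k <-> dom k = setT.
Proof.
rewrite /total_in_prod => -> fullI; split=> [[]//| domk]; split=> // w _.
have : w \in dom k by rewrite domk in_setT.
by rewrite in_dom; case: (k w) => // x _; exists x; rewrite ?fullI ?in_setT.
Qed.

Lemma free_choiceE Th : EOf Th = setT -> (forall w, IOf Th w = setT) ->
  free_choice Th <-> (forall t, dom t = setT -> t \in Ext Th).
Proof.
move=> fullE fullI; have totalE k := total_in_prodE k fullE fullI.
split=> [fc t /totalE/fc[] // | totExt k].
split=> [[kExt kmax] | /totalE domk].
  have [t le_kt domt] := exists_total_le k.
  by apply/totalE; rewrite -(kmax t (totExt t domt) le_kt).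
split=> [|k' _ le_kk']; first exact: totExt.
by apply/esym/pf_le_dom_eq; rewrite // domk subsetT.
Qed.

Lemma CC_smeet Th Th' : CC Th -> CC Th' -> CC (smeet Th Th').
Proof.
move=> [vee [[fc tips1] [fullE fullI]]] [vee' [[fc' tips1'] [fullE' fullI']]].
rewrite /smeet; set W := Ext Th :|: Ext Th'.
have subW : Th \subset W by rewrite (subset_trans (sub_Ext Th)) ?subsetUl.
have subW' : Th' \subset W by rewrite (subset_trans (sub_Ext Th')) ?subsetUr.
have fullEW : EOf (Prime W) = setT.
  by apply/eqP; rewrite eqEsubset subsetT EOf_Prime -fullE EOfS.
have fullIW w : IOf (Prime W) w = setT.
  by apply/eqP; rewrite eqEsubset subsetT IOf_Prime -(fullI w) IOfS.
split; first exact: Prime_vee.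
split; last by [].
split.
  apply/free_choiceE => // t domt.
  have tExt : t \in Ext Th := (free_choiceE fullE fullI).1 fc t domt.
  by apply: Ext_Prime (Ext_dom_neq0 vee tExt); rewrite inE tExt.
move=> h hP; have /setUP[hExt|hExt] := subsetP (Prime_sub W) h hP.
  exact: card_tips_Prime subW (tips1 h (mem_Prime_Ext subW hP hExt)) hP.
exact: card_tips_Prime subW' (tips1' h (mem_Prime_Ext subW' hP hExt)) hP.
Qed.

Section Downsets.
Variable le : rel E.
Hypotheses (le_refl : reflexive le) (le_trans : transitive le)
  (le_anti : antisymmetric le).

Definition downset w : {set E} := [set v | le v w].

Lemma in_downset v w : (v \in downset w) = le v w.
Proof. by rewrite inE. Qed.

Definition downset_space : {set pf} := [set f | [exists w, dom f == downset w]].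

Lemma downset_spaceP f :
  reflect (exists w, dom f = downset w) (f \in downset_space).
Proof.
by rewrite inE; apply: (iffP existsP) => -[w /eqP]; exists w => //; apply/eqP.
Qed.

Lemma dom_Ext_downset k v w :
  k \in Ext downset_space -> v \in dom k -> le w v -> w \in dom k.
Proof.
move=> kExt vk le_wv.
have [g [/downset_spaceP[u dom_g] le_gk vg]] := Ext_generator kExt vk.
apply: (subsetP (pf_le_dom le_gk)); move: vg; rewrite dom_g !in_downset.
exact: le_trans.
Qed.

Lemma downset_vee_prime : vee_prime downset_space.
Proof.
move=> F sF cF /downset_spaceP[w dom_j].
have : w \in dom (pjoin F) by rewrite dom_j in_downset le_refl.
rewrite dom_pjoin => /bigcupP[f fF wf].
have /downset_spaceP[u dom_f] := subsetP sF f fF.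
suff <- : f = pjoin F by [].
apply: pf_le_dom_eq; first exact: pjoin_ub.
rewrite dom_j dom_f; apply/subsetP => v; rewrite !in_downset => le_vw.
by apply: le_trans le_vw _; move: wf; rewrite dom_f in_downset.
Qed.

Lemma tips_downset h w : dom h = downset w -> tips downset_space h = [set w].
Proof.
move=> dom_h; apply/setP => v; rewrite tipsE in_set1 in_set dom_h in_downset.
have [->|ne_vw] := eqVneq v w.
  rewrite le_refl /=; apply/exists_inP => -[g /downset_spaceP[u dom_g]].
  case/andP=> /andP[le_gh ne_gh] wg; move: ne_gh.
  have le_hg : dom h \subset dom g.
    rewrite dom_h dom_g; apply/subsetP => x; rewrite !in_downset => le_xw.
    by apply: le_trans le_xw _; move: wg; rewrite dom_g in_downset.
  by rewrite (pf_le_dom_eq le_gh le_hg) eqxx.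
apply/negbTE; rewrite negb_and negbK -implybE; apply/implyP => le_vw.
have sub_vw : downset v \subset downset w.
  by apply/subsetP => x; rewrite !in_downset => le_xv; apply: le_trans le_xv le_vw.
apply/exists_inP; exists (restr h (downset v)).
  by apply/downset_spaceP; exists v; rewrite dom_restr dom_h; apply/setIidPl.
rewrite pf_lt_dom ?restr_le // dom_restr dom_h (setIidPl sub_vw) in_downset le_refl.
rewrite andbT; apply/eqP => /setP/(_ w); rewrite !in_downset le_refl => le_wv.
by move: ne_vw; rewrite (@le_anti v w) ?le_vw ?le_wv ?eqxx.
Qed.

(* [Ext] only contains joins of nonempty families, so for empty [E] the empty
   history, which is then total, is not in it. *)
Lemma CC_downset_space : 0 < #|E| -> CC downset_space.
Proof.
case/card_gt0P => w0 _.
have restr_in t w : dom t = setT -> restr t (downset w) \in downset_space.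
  by move=> domt; apply/downset_spaceP; exists w; rewrite dom_restr domt setIT.
have fullI w : IOf downset_space w = setT.
  apply/setP => x; rewrite !inE; have [t tx domt] := exists_total_at x.
  apply/exists_inP; exists (restr t (downset w)); first exact: restr_in.
  by rewrite ffunE in_downset le_refl tx.
have fullE : EOf downset_space = setT.
  apply/setP => w; rewrite in_setT; have [t _ domt] := exists_total_at (d w).
  apply/bigcupP; exists (restr t (downset w)); first exact: restr_in.
  by rewrite dom_restr domt setIT in_downset le_refl.
split; first exact: downset_vee_prime.
split; last by [].
split=> [|h /downset_spaceP[w /tips_downset->]]; last exact: cards1.
apply/free_choiceE => // t domt; apply/ExtP.
exists [set restr t (downset w) | w : E]; last first.
  apply/esym/pjoin_cover => [_ /imsetP[w _ ->]|]; first exact: restr_le.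
  apply/subsetP => w _; apply/bigcupP; exists (restr t (downset w)).
    exact: imset_f.
  by rewrite dom_restr domt setIT in_downset le_refl.
split; [ by apply/subsetP => _ /imsetP[w _ ->]; apply: restr_in
       | by apply/set0Pn; exists (restr t (downset w0)); apply: imset_f | ].
by apply: (bounded_compatible (t := t)) => _ /imsetP[w _ ->]; apply: restr_le.
Qed.

End Downsets.

Definition chain2 (x y : E) : rel E :=
  [rel v w | (v == w) || (v == x) && (w == y)].

Lemma chain2_lt x y : chain2 x y x y.
Proof. by rewrite /chain2 /= !eqxx orbT. Qed.

Lemma chain2_refl x y : reflexive (chain2 x y).
Proof. by move=> v; rewrite /chain2 /= eqxx. Qed.

Lemma chain2_trans x y : transitive (chain2 x y).
Proof.
move=> v u w /orP[/eqP->//|/andP[/eqP-> /eqP->]].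
by case/orP=> [/eqP<-|/andP[_ /eqP->]]; apply: chain2_lt.
Qed.

Lemma chain2_anti x y : x != y -> antisymmetric (chain2 x y).
Proof.
move=> neq_xy v w /andP[/orP[/eqP//|/andP[/eqP-> /eqP->]]].
by rewrite /chain2 /= eq_sym (negbTE neq_xy).
Qed.

Lemma downset_chain2 x y : downset (chain2 x y) y = [set x; y].
Proof. by apply/setP => v; rewrite in_downset !inE /chain2 /= eqxx andbT orbC. Qed.

Lemma CC_chain2 a b : a != b -> CC (downset_space (chain2 a b)).
Proof.
move=> neq_ab; apply: CC_downset_space (@chain2_trans a b) (chain2_anti neq_ab) _.
  exact: chain2_refl.
by apply/card_gt0P; exists a.
Qed.

Lemma sjoin_chain2_not_CC a b : a != b ->
  ~ CC (sjoin (downset_space (chain2 a b)) (downset_space (chain2 b a))).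
Proof.
move=> neq_ab; rewrite /sjoin.
set Th := downset_space _; set Th' := downset_space _.
set W := Ext Th :&: Ext Th'.
have dom_W g : g \in W -> (a \in dom g) = (b \in dom g).
  rewrite inE => /andP[gExt gExt']; apply/idP/idP => [ag|bg].
    exact: dom_Ext_downset (@chain2_trans b a) _ _ _ gExt' ag (chain2_lt b a).
  exact: dom_Ext_downset (@chain2_trans a b) _ _ _ gExt bg (chain2_lt a b).
pose h := restr [ffun w => Some (d w)] [set a; b].
have dom_h : dom h = [set a; b].
  by rewrite dom_restr; apply/setIidPl/subsetP => w _; rewrite in_dom ffunE.
have hW : h \in W.
  rewrite inE !(subsetP (sub_Ext _)) //; apply/downset_spaceP.
    by exists a; rewrite dom_h downset_chain2 setUC.
  by exists b; rewrite dom_h downset_chain2.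
have below_h g : g \in W -> pf_le g h -> a \in dom g -> g = h.
  move=> gW le_gh ag; apply: pf_le_dom_eq le_gh _.
  by rewrite dom_h subUset !sub1set -(dom_W g gW) ag.
have hP : h \in Prime W.
  apply/PrimeP; split=> // F sF cF eq_h.
  have : a \in dom (pjoin F) by rewrite -eq_h dom_h !inE eqxx.
  rewrite dom_pjoin => /bigcupP[f fF af].
  by rewrite -(below_h f) ?(subsetP sF) // eq_h pjoin_ub.
have tips_h : [set a; b] \subset tips (Prime W) h.
  apply/subsetP => v vab; rewrite tipsE in_set dom_h vab /=.
  apply/exists_inP => -[g gP /andP[lt_gh vg]].
  have gW := subsetP (Prime_sub W) g gP.
  have ag : a \in dom g by case/set2P: vab vg => -> //; rewrite (dom_W g gW).
  case/andP: lt_gh => le_gh; by rewrite (below_h g) ?eqxx.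
case=> _ [[_ tips1] _].
by have := subset_leq_card tips_h; rewrite cards2 neq_ab (tips1 h hP).
Qed.

End Totals.
End PartialFunctions.

Theorem proposition20 (E : finType) (I : E -> finType)
  (HI : forall w : E, 0 < #|I w|) :
  (forall Th Th' : {set pfun I}, CC Th -> CC Th' -> CC (smeet Th Th')) /\
  (1 < #|E| -> exists Th Th' : {set pfun I},
      CC Th /\ CC Th' /\ ~ CC (sjoin Th Th')).
Proof.
have d w : I w := xchoose (card_gt0P (HI w)).
split=> [Th Th'|/card_gt1P[a [b [_ _ neq_ab]]]]; first exact: (CC_smeet d).
exists (downset_space I (chain2 a b)), (downset_space I (chain2 b a)).
split; [exact: (CC_chain2 d neq_ab) | split; [|exact: (sjoin_chain2_not_CC d neq_ab)]].
by apply: (CC_chain2 d); rewrite eq_sym.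
Qed.
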